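(* Let $\Lambda$ and $\Lambda_1$ be rings and let $T$ be a one-variable functor from left $\Lambda$-modules to $\Lambda_1$-modules. (i) Suppose $T$ is covariant, right exact, and of type $L\Sigma^{*}$ (i.e. commutes with direct limits), and suppose $T(\Lambda/I)=0$ for every finitely generated left ideal $I$ of $\Lambda$. Then $T=0$, i.e. $T(A)=0$ for every left $\Lambda$-module $A$. (ii) Suppose $T$ is contravariant, left exact, and of type $R\Sigma^{*}$ (i.e. commutes with inverse limits), and suppose $T(I)=0$ for every left ideal $I$ of $\Lambda$. Then $T=0$.
   Context: Direct systems $\{A^{\alpha},\varphi^{\alpha}_{\beta}\}$ and inverse systems $\{A_\alpha,\psi^\beta_\alpha\}$ are indexed by directed sets. For a direct system with direct limit $\varinjlim A^{\alpha}$ and canonical maps $\sigma^{\alpha}:A^{\alpha}\to\varinjlim A^{\gamma}$, a covariant functor $T$ gives a direct system $\{T(A^\alpha),T(\varphi^\alpha_\beta)\}$ and an induced canonical homomorphism $\widehat{\sigma}:\varinjlim T(A^{\alpha})\to T(\varinjlim A^{\alpha})$ determined by $\widehat\sigma\circ\sigma^\alpha_T=T(\sigma^\alpha)$ (where $\sigma^\alpha_T:T(A^\alpha)\to\varinjlim T(A^\gamma)$ is the canonical map); $T$ is of type $L\Sigma^{*}$ if $\widehat\sigma$ is an isomorphism for every direct system. For an inverse system with inverse limit $\varprojlim A_\alpha$ and canonical maps $\xi_\alpha:\varprojlim A_\gamma\to A_\alpha$, a functor $T$ is of type $R\Sigma^{*}$ if the canonical comparison map between $T(\varprojlim A_\alpha)$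 and the corresponding limit of the system $\{T(A_\alpha)\}$, induced by the maps $T(\xi_\alpha)$, is an isomorphism for every inverse system; for a contravariant functor this is the map with arrows reversed relative to the covariant case (the paper's convention). A covariant functor is right exact if it sends short exact sequences $0\to A'\to A\to A''\to 0$ to exact sequences $T(A')\to T(A)\to T(A'')\to 0$; a contravariant functor is left exact if it sends them to exact sequences $0\to T(A'')\to T(A)\to T(A')$. *)

From HB Require Import structures.
From mathcomp Require Import all_boot all_order all_algebra.
Set Implicit Arguments. Unset Strict Implicit. Unset Printing Implicit Defensive.
Import GRing.Theory.
Local Open Scope ring_scope.

(* Covariant functor from left R-modules to left R1-modules. Functoriality and
   additivity are stated pointwise (morphisms are functions). *)
Record CovFunctor (R R1 : pzRingType) := {
  cobj :> lmodType R -> lmodType R1;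
  cmap : forall A B : lmodType R, {linear A -> B} -> {linear cobj A -> cobj B};
  cmap_id : forall (A : lmodType R) (h : {linear A -> A}),
      (forall x, h x = x) -> forall y, cmap h y = y;
  cmap_comp : forall (A B C : lmodType R) (f : {linear A -> B})
      (g : {linear B -> C}) (h : {linear A -> C}),
      (forall x, h x = g (f x)) -> forall y, cmap h y = cmap g (cmap f y);
  cmap_add : forall (A B : lmodType R) (f g h : {linear A -> B}),
      (forall x, h x = f x + g x) -> forall y, cmap h y = cmap f y + cmap g y
}.

Record ContraFunctor (R R1 : pzRingType) := {
  kobj :> lmodType R -> lmodType R1;
  kmap : forall A B : lmodType R, {linear A -> B} -> {linear kobj B -> kobj A};
  kmap_id : forall (A : lmodType R) (h : {linear A -> A}),
      (forall x, h x = x) -> forall y, kmap h y = y;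
  kmap_comp : forall (A B C : lmodType R) (f : {linear A -> B})
      (g : {linear B -> C}) (h : {linear A -> C}),
      (forall x, h x = g (f x)) -> forall y, kmap h y = kmap f (kmap g y);
  kmap_add : forall (A B : lmodType R) (f g h : {linear A -> B}),
      (forall x, h x = f x + g x) -> forall y, kmap h y = kmap f y + kmap g y
}.

Definition exact_at (R : pzRingType) (A B C : lmodType R)
  (f : A -> B) (g : B -> C) : Prop :=
  forall y : B, g y = 0 <-> exists x : A, y = f x.

Definition short_exact (R : pzRingType) (A' A A'' : lmodType R)
  (f : A' -> A) (g : A -> A'') : Prop :=
  injective f /\ exact_at f g /\ (forall z : A'', exists y : A, g y = z).

Definition right_exact (R R1 : pzRingType) (T : CovFunctor R R1) : Prop :=
  forall (A' A A'' : lmodType R) (f : {linear A' -> A}) (g : {linear A -> A''}),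
    short_exact f g ->
    exact_at (cmap T f) (cmap T g) /\ (forall z : T A'', exists y, cmap T g y = z).

Definition left_exact (R R1 : pzRingType) (T : ContraFunctor R R1) : Prop :=
  forall (A' A A'' : lmodType R) (f : {linear A' -> A}) (g : {linear A -> A''}),
    short_exact f g ->
    injective (kmap T g) /\ exact_at (kmap T g) (kmap T f).

Definition directed (I : Type) (le : I -> I -> Prop) : Prop :=
  inhabited I /\ (forall a, le a a) /\ (forall a b c, le a b -> le b c -> le a c)
  /\ (forall a b, exists c, le a c /\ le b c).

Definition direct_system (R : pzRingType) (I : Type) (le : I -> I -> Prop)
  (A : I -> lmodType R) (phi : forall a b, le a b -> {linear A a -> A b}) : Prop :=
  (forall a (h : le a a) x, phi a a h x = x) /\
  (forall a b c (hab : le a b) (hbc : le b c) (hac : le a c) x,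
      phi a c hac x = phi b c hbc (phi a b hab x)).

Definition is_direct_limit (R : pzRingType) (I : Type) (le : I -> I -> Prop)
  (A : I -> lmodType R) (phi : forall a b, le a b -> {linear A a -> A b})
  (L : lmodType R) (sigma : forall a, {linear A a -> L}) : Prop :=
  (forall a b (h : le a b) x, sigma b (phi a b h x) = sigma a x) /\
  (forall (M : lmodType R) (tau : forall a, {linear A a -> M}),
     (forall a b (h : le a b) x, tau b (phi a b h x) = tau a x) ->
     (exists u : {linear L -> M}, forall a x, u (sigma a x) = tau a x) /\
     (forall u v : {linear L -> M},
        (forall a x, u (sigma a x) = tau a x) ->
        (forall a x, v (sigma a x) = tau a x) -> forall y, u y = v y)).

Definition inverse_system (R : pzRingType) (I : Type) (le : I -> I -> Prop)
  (A : I -> lmodType R) (psi : forall a b, le a b -> {linear A b -> A a}) : Prop :=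
  (forall a (h : le a a) x, psi a a h x = x) /\
  (forall a b c (hab : le a b) (hbc : le b c) (hac : le a c) x,
      psi a c hac x = psi a b hab (psi b c hbc x)).

Definition is_inverse_limit (R : pzRingType) (I : Type) (le : I -> I -> Prop)
  (A : I -> lmodType R) (psi : forall a b, le a b -> {linear A b -> A a})
  (L : lmodType R) (xi : forall a, {linear L -> A a}) : Prop :=
  (forall a b (h : le a b) x, psi a b h (xi b x) = xi a x) /\
  (forall (M : lmodType R) (tau : forall a, {linear M -> A a}),
     (forall a b (h : le a b) x, psi a b h (tau b x) = tau a x) ->
     (exists u : {linear M -> L}, forall a x, xi a (u x) = tau a x) /\
     (forall u v : {linear M -> L},
        (forall a x, xi a (u x) = tau a x) ->
        (forall a x, xi a (v x) = tau a x) -> forall y, u y = v y)).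

(* Type L Sigma^* : the canonical map lim T(A^a) -> T(lim A^a) is an
   isomorphism, i.e. (T(lim A^a), T(sigma^a)) is a direct limit of the
   system {T(A^a), T(phi^a_b)}. *)
Definition type_LSigma (R R1 : pzRingType) (T : CovFunctor R R1) : Prop :=
  forall (I : Type) (le : I -> I -> Prop) (A : I -> lmodType R)
    (phi : forall a b, le a b -> {linear A a -> A b})
    (L : lmodType R) (sigma : forall a, {linear A a -> L}),
    directed le -> direct_system phi -> is_direct_limit phi sigma ->
    is_direct_limit (A := fun a => T (A a)) (fun a b h => cmap T (phi a b h))
                    (L := T L) (fun a => cmap T (sigma a)).

(* Type R Sigma^* for a contravariant functor: the canonical map
   lim_-> T(A_a) -> T(lim_<- A_a) induced by the T(xi_a) is an isomorphism,
   i.e. (T(lim A_a), T(xi_a)) is a direct limit of {T(A_a), T(psi^b_a)}. *)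
Definition type_RSigma (R R1 : pzRingType) (T : ContraFunctor R R1) : Prop :=
  forall (I : Type) (le : I -> I -> Prop) (A : I -> lmodType R)
    (psi : forall a b, le a b -> {linear A b -> A a})
    (L : lmodType R) (xi : forall a, {linear L -> A a}),
    directed le -> inverse_system psi -> is_inverse_limit psi xi ->
    is_direct_limit (A := fun a => T (A a)) (fun a b h => kmap T (psi a b h))
                    (L := T L) (fun a => kmap T (xi a)).

Definition left_ideal (R : pzRingType) (I : R -> Prop) : Prop :=
  I 0 /\ (forall x y, I x -> I y -> I (x + y)) /\ (forall r x, I x -> I (r * x)).

Definition fg_left_ideal (R : pzRingType) (I : R -> Prop) : Prop :=
  left_ideal I /\
  exists (n : nat) (g : 'I_n -> R),
    forall x, I x <-> exists c : 'I_n -> R, x = \sum_(i < n) c i * g i.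

(* Q is (a model of) the cyclic module Lambda/I: there is a surjective
   Lambda-linear map Lambda -> Q with kernel I. *)
Definition is_quotient_by (R : pzRingType) (I : R -> Prop) (Q : lmodType R)
  (p : {linear R^o -> Q}) : Prop :=
  (forall z : Q, exists r : R^o, p r = z) /\ (forall r : R^o, p r = 0 <-> I r).

(* M is (a model of) the left ideal I viewed as a left module: there is an
   injective Lambda-linear map M -> Lambda with image I. *)
Definition is_ideal_module (R : pzRingType) (I : R -> Prop) (M : lmodType R)
  (j : {linear M -> R^o}) : Prop :=
  injective j /\ (forall r : R^o, I r <-> exists m : M, j m = r).

(** Both functors vanish on [Lambda] (take [I = 0] in (i), [I = Lambda] in (ii)),
    hence on every finite free module [Lambda^(s)]: its identity is a finite sum
    of maps factoring through [Lambda].  Every module [A] is a quotient of the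
    free module [Lambda^(A)] on its underlying set, so by (right, resp. left)
    exactness it suffices to show that [T] kills [Lambda^(A)].
    (i)  [Lambda^(A)] is the directed union, hence the direct limit, of its
         finite free submodules [Lambda^(s)], and [T] commutes with it.
    (ii) Let [W_s] be the submodule of [Lambda^(A)] of functions vanishing on
         [s].  The [W_s] form an inverse system with limit [0], and the splitting
         [Lambda^(A) = Lambda^(s) (+) W_s] makes the maps [T(W_s) -> T(Lambda^(A))]
         a compatible family of surjections; they factor through
         [lim T(W_s) = T(0) = 0]. *)

From HB Require Import structures.
From mathcomp Require Import all_boot all_order all_algebra.
From mathcomp Require Import boolp functions.
Set Implicit Arguments. Unset Strict Implicit. Unset Printing Implicit Defensive.
Import GRing.Theory.
Local Open Scope ring_scope.

Section Submodule.
Variables (R : pzRingType) (V : lmodType R) (S : submodClosed V).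

Record submod := Submod { submod_val : V; submod_valP : submod_val \in S }.

HB.instance Definition _ := [isSub for submod_val].
HB.instance Definition _ := [Choice of submod by <:].
HB.instance Definition _ := [SubChoice_isSubLmodule of submod by <:].

Section Corestriction.
Variables (U : lmodType R) (g : {linear U -> V}) (gS : forall x, g x \in S).

Definition corestr (x : U) : submod := Submod (gS x).

Lemma corestr_is_linear : linear corestr.
Proof. by move=> a x y; apply: val_inj; rewrite /= linearP. Qed.

HB.instance Definition _ :=
  GRing.isLinear.Build R U submod _ corestr corestr_is_linear.

End Corestriction.
End Submodule.

Section Kernel.
Variables (R : pzRingType) (U V : lmodType R) (g : {linear U -> V}).

Definition kernel : {pred U} := [pred x | g x == 0].

Lemma kernel_submod_closed : submod_closed kernel.
Proof.
split=> [|a x y]; first by rewrite inE linear0.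
by rewrite !inE linearP => /eqP-> /eqP->; rewrite scaler0 addr0.
Qed.

HB.instance Definition _ := GRing.isSubmodClosed.Build R U kernel
  (GRing.submod_closed_semi kernel_submod_closed).

Lemma kernel_short_exact :
  (forall z, exists y, g y = z) -> short_exact (val : submod kernel -> U) g.
Proof.
move=> g_surj; split; first exact: val_inj.
split=> // y; split=> [gy0 | [x ->]]; last exact/eqP/(valP x).
have ker_y : y \in kernel by exact/eqP.
by exists (Sub y ker_y).
Qed.

End Kernel.

Section AdditiveAction.
Variables (R : pzRingType) (U V : lmodType R) (P Q : zmodType).
Variable Phi : {linear U -> V} -> P -> Q.
Hypothesis PhiD : forall f g h : {linear U -> V},
  (forall x, h x = f x + g x) -> forall y, Phi h y = Phi f y + Phi g y.

Lemma additive_action_eq0 (f : {linear U -> V}) :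
  (forall x, f x = 0) -> forall y, Phi f y = 0.
Proof.
move=> f0 y; apply/esym/(addrI (Phi f y)).
by rewrite addr0 -(PhiD (h := f)) // => x; rewrite f0 addr0.
Qed.

Lemma additive_action_sum_eq0 (I : Type) (r : seq I) (g : I -> {linear U -> V})
    (f : {linear U -> V}) :
  (forall i y, Phi (g i) y = 0) -> (forall x, f x = \sum_(i <- r) g i x) ->
  forall y, Phi f y = 0.
Proof.
move=> g0; elim: r f => [|i r IHr] f fE y.
  by apply: additive_action_eq0 => x; rewrite fE big_nil.
rewrite (PhiD (f := g i) (g := f \- g i)) ?g0 ?add0r => [|x]; last first.
  by rewrite /= addrC subrK.
by apply: IHr => x; rewrite /= fE big_cons addrC addKr.
Qed.

End AdditiveAction.

Section Dirac.
Variables (R : pzRingType) (Y : eqType).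

Definition fun_eval (i : Y) (f : Y -> R^o) : R^o := f i.
Definition dirac (i : Y) (r : R^o) : Y -> R^o := fun j => if i == j then r else 0.

Lemma fun_eval_is_linear i : linear (fun_eval i). Proof. by []. Qed.
HB.instance Definition _ i :=
  GRing.isLinear.Build R (Y -> R^o) R^o _ (fun_eval i) (@fun_eval_is_linear i).

Lemma dirac_is_linear i : linear (dirac i).
Proof.
move=> a r s; apply/funext => j.
by rewrite /dirac !fctE; case: eqP; rewrite ?scaler0 ?addr0.
Qed.
HB.instance Definition _ i :=
  GRing.isLinear.Build R R^o (Y -> R^o) _ (dirac i) (@dirac_is_linear i).

End Dirac.

Lemma finfun_dirac_sum (R : pzRingType) (Y : finType) (f : Y -> R^o) :
  f = \sum_(i <- index_enum Y) dirac i (fun_eval i f).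
Proof.
apply/funext => j; rewrite fct_sumE /dirac /fun_eval -big_mkcond /=.
by rewrite big_pred1_eq.
Qed.

Lemma direct_limit_trivial (R : pzRingType) (I : Type) (le : I -> I -> Prop)
    (A : I -> lmodType R) (phi : forall i j, le i j -> {linear A i -> A j})
    (L : lmodType R) (sigma : forall i, {linear A i -> L}) :
  is_direct_limit phi sigma -> (forall i (x : A i), x = 0) -> forall y : L, y = 0.
Proof.
move=> [sigmaK univ] A0 y; have [_ uniq] := univ L sigma sigmaK.
by apply: (uniq idfun \0) => // i x; rewrite (A0 i x) linear0.
Qed.

Section MonoCocone.
Variables (R : pzRingType) (I : Type) (le : I -> I -> Prop) (A : I -> lmodType R).
Variables (L : lmodType R) (phi : forall i j, le i j -> {linear A i -> A j}).
Variable sigma : forall i, {linear A i -> L}.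
Hypotheses (le_directed : directed le) (sigma_inj : forall i, injective (sigma i)).
Hypothesis sigmaK : forall i j (h : le i j) x, sigma j (phi h x) = sigma i x.
Hypothesis sigma_cover : forall y, exists i x, sigma i x = y.

Lemma mono_cocone_direct_system : direct_system phi.
Proof.
split=> [i h x | i j k hij hjk hik x]; apply: sigma_inj; first by rewrite sigmaK.
by rewrite !sigmaK.
Qed.

Let common_bound i j : exists k, le i k /\ le j k.
Proof. by case: le_directed => _ [_ [_]]. Qed.

Let cover2 y z : exists k x x', sigma k x = y /\ sigma k x' = z.
Proof.
have [[i [x <-]] [j [x' <-]]] := (sigma_cover y, sigma_cover z).
have [k [hik hjk]] := common_bound i j.
by exists k, (phi hik x), (phi hjk x'); rewrite !sigmaK.
Qed.

Section Lift.
Variables (M : lmodType R) (tau : forall i, {linear A i -> M}).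
Hypothesis tauK : forall i j (h : le i j) x, tau j (phi h x) = tau i x.

Let tau_agree i j x x' : sigma i x = sigma j x' -> tau i x = tau j x'.
Proof.
move=> eq_xx'; have [k [hik hjk]] := common_bound i j.
rewrite -(tauK hik) -(tauK hjk); congr (tau k _); apply: sigma_inj.
by rewrite !sigmaK.
Qed.

Let index_of y := projT1 (cid (sigma_cover y)).
Let preimage y : A (index_of y) := projT1 (cid (projT2 (cid (sigma_cover y)))).
Let preimageK y : sigma (index_of y) (preimage y) = y :=
  projT2 (cid (projT2 (cid (sigma_cover y)))).

Let lift y := tau (index_of y) (preimage y).

Let lift_sigma i x : lift (sigma i x) = tau i x.
Proof. exact/tau_agree/preimageK. Qed.

Let lift_is_linear : linear lift.
Proof.
move=> a y z; have [k [x [x' [<- <-]]]] := cover2 y z.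
by rewrite -linearP !lift_sigma linearP.
Qed.

Lemma mono_cocone_lift :
  exists u : {linear L -> M}, forall i x, u (sigma i x) = tau i x.
Proof.
exists (HB.pack_for {linear L -> M} lift
  (GRing.isLinear.Build R L M *:%R lift lift_is_linear)).
exact: lift_sigma.
Qed.

End Lift.

Lemma mono_cocone_direct_limit : is_direct_limit phi sigma.
Proof.
split=> // M tau tauK; split; first exact: mono_cocone_lift.
by move=> u v uE vE y; have [i [x <-]] := sigma_cover y; rewrite uE vE.
Qed.

End MonoCocone.

Section MonoCone.
Variables (R : pzRingType) (I : Type) (le : I -> I -> Prop) (W : I -> lmodType R).
Variables (V : lmodType R) (psi : forall i j, le i j -> {linear W j -> W i}).
Variable iota : forall i, {linear W i -> V}.
Hypotheses (le_directed : directed le) (iota_inj : forall i, injective (iota i)).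
Hypothesis iotaK : forall i j (h : le i j) x, iota i (psi h x) = iota j x.
Hypothesis iota_meet0 : forall v, (forall i, exists x, iota i x = v) -> v = 0.

Lemma mono_cone_inverse_system : inverse_system psi.
Proof.
split=> [i h x | i j k hij hjk hik x]; apply: iota_inj; first by rewrite iotaK.
by rewrite !iotaK.
Qed.

Lemma mono_cone_inverse_limit (Z : lmodType R) :
  (forall z : Z, z = 0) -> is_inverse_limit psi (fun i => \0 : {linear Z -> W i}).
Proof.
move=> Z0; split=> [i j h x | M tau tauK]; first exact: linear0.
split=> [|u v _ _ y]; last by rewrite (Z0 (u y)) (Z0 (v y)).
exists \0 => i x /=; apply/esym/iota_inj; rewrite linear0.
apply: iota_meet0 => k; have [_ [_ [_ /(_ i k) [j [hij hkj]]]]] := le_directed.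
by exists (psi hkj (tau j x)); rewrite !iotaK -(tauK _ _ hij) iotaK.
Qed.

End MonoCone.

Section FreeModule.
Variables (R : pzRingType) (X : choiceType).
Implicit Types s t : seq X.

Definition finsupp : {pred X -> R^o} :=
  fun x => `[< exists s : seq X, forall a, a \notin s -> x a = 0 >].

Lemma finsupp_submod_closed : submod_closed finsupp.
Proof.
split=> [|c x y /asboolP[s xs] /asboolP[t yt]]; apply/asboolP; first by exists [::].
exists (s ++ t) => a; rewrite mem_cat negb_or => /andP[/xs xa0 /yt ya0].
by rewrite !fctE xa0 ya0 scaler0 addr0.
Qed.

HB.instance Definition _ := GRing.isSubmodClosed.Build R _ finsupp
  (GRing.submod_closed_semi finsupp_submod_closed).

Definition freemod := submod finsupp.

Local Notation freeon s := (seq_sub s -> R^o).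

Lemma freemod_supp (x : freemod) :
  exists s : seq X, forall a, a \notin s -> val x a = 0.
Proof. exact/asboolP/(valP x). Qed.

Definition extend_fun (s : seq X) (f : freeon s) (a : X) : R^o :=
  if insub a is Some y then f y else 0.

Lemma extend_fun_out s (f : freeon s) a : a \notin s -> extend_fun f a = 0.
Proof. by move=> sNa; rewrite /extend_fun insubN. Qed.

Lemma extend_funE s (f : freeon s) (y : seq_sub s) : extend_fun f (val y) = f y.
Proof. by rewrite /extend_fun valK. Qed.

Lemma extend_fun_in s (f : freeon s) a (sa : a \in s) : extend_fun f a = f (Sub a sa).
Proof. by rewrite -extend_funE SubK. Qed.

Lemma extend_fun_finsupp s (f : freeon s) : extend_fun f \in finsupp.
Proof. by apply/asboolP; exists s => a; apply: extend_fun_out. Qed.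

Definition extend s (f : freeon s) : freemod := Submod (extend_fun_finsupp f).

Lemma extend_is_linear s : linear (@extend s).
Proof.
move=> c f g; apply/val_inj/funext => a /=; rewrite !fctE /extend_fun.
by case: insub; rewrite ?scaler0 ?addr0.
Qed.

HB.instance Definition _ (s : seq X) :=
  GRing.isLinear.Build R (freeon s) freemod _ (@extend s) (@extend_is_linear s).

Definition restr s (x : freemod) : freeon s := fun y => val x (val y).
Arguments restr : clear implicits.

Lemma restr_is_linear s : linear (restr s). Proof. by []. Qed.

HB.instance Definition _ (s : seq X) :=
  GRing.isLinear.Build R freemod (freeon s) _ (restr s) (@restr_is_linear s).

Lemma extendK s : cancel (@extend s) (restr s).
Proof. by move=> f; apply/funext => y; apply: extend_funE. Qed.

Lemma restrK s (x : freemod) :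
  (forall a, a \notin s -> val x a = 0) -> extend (restr s x) = x.
Proof.
move=> xs; apply/val_inj/funext => a /=; rewrite /extend_fun.
by case: insubP => [y _ <- // | /xs ->].
Qed.

Definition widen s t (_ : {subset s <= t}) : {linear freeon s -> freeon t} :=
  restr t \o @extend s.

Lemma subset_directed : directed (fun s t : seq X => {subset s <= t}).
Proof.
split; first exact: (inhabits [::]).
split=> [s a //|]; split=> [s t u st tu a /st /tu //|s t].
by exists (s ++ t); split=> a a_in; rewrite mem_cat a_in ?orbT.
Qed.

Lemma extend_widen s t (st : {subset s <= t}) (f : freeon s) :
  extend (widen st f) = extend f.
Proof. by apply: restrK => a /negP ta; apply: extend_fun_out; apply/negP => /st. Qed.

Lemma freemod_direct_system : direct_system widen.
Proof.
apply: mono_cocone_direct_system (@extend_widen).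
by move=> s; apply: can_inj (@extendK s).
Qed.

Lemma freemod_direct_limit : is_direct_limit widen extend.
Proof.
apply: mono_cocone_direct_limit subset_directed _ (@extend_widen) _.
  by move=> s; apply: can_inj (@extendK s).
by move=> x; have [s xs] := freemod_supp x; exists s, (restr s x); apply: restrK.
Qed.

Definition vanishing t := submod (kernel (restr t)).

Definition proj_on t : {linear freemod -> freemod} := @extend t \o restr t.

Lemma proj_off_subproof t (x : freemod) :
  (idfun \- proj_on t) x \in kernel (restr t).
Proof. by rewrite inE /= linearB /= extendK subrr. Qed.

Definition proj_off t : {linear freemod -> vanishing t} :=
  corestr (@proj_off_subproof t).

Lemma restr_eq0_subset s t (x : freemod) :
  {subset s <= t} -> restr t x = 0 -> restr s x = 0.
Proof.
move=> st tx0; apply/funext => y.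
by have := congr1 (fun f => f (Sub (val y) (st _ (valP y)))) tx0.
Qed.

Lemma vanishing_incl_subproof s t (st : {subset s <= t}) (w : vanishing t) :
  val w \in kernel (restr s).
Proof. by rewrite inE; apply/eqP/(restr_eq0_subset st)/eqP/(valP w). Qed.

Definition vanishing_incl s t (st : {subset s <= t}) :
  {linear vanishing t -> vanishing s} := corestr (vanishing_incl_subproof st).

Lemma vanishing_inverse_system : inverse_system vanishing_incl.
Proof.
by apply: (mono_cone_inverse_system
  (iota := fun t => val : {linear vanishing t -> freemod})).
Qed.

Lemma vanishing_inverse_limit (Z : lmodType R) : (forall z : Z, z = 0) ->
  is_inverse_limit vanishing_incl (fun t => \0 : {linear Z -> vanishing t}).
Proof.
move=> Z0.
apply: (mono_cone_inverse_limit (iota := fun t => val : {linear vanishing t -> freemod}))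
  Z0 => //; first exact: subset_directed.
move=> x x_in; apply/val_inj/funext => a; have [w wx] := x_in [:: a].
have /eqP/(congr1 (fun f => f (Sub a (mem_head a [::])))) := valP w.
by rewrite wx.
Qed.

Lemma proj_off_incl s t (st : {subset s <= t}) (x : freemod) :
  vanishing_incl st (proj_off t x) = proj_off s ((idfun \- proj_on t) x).
Proof.
apply: val_inj => /=.
by rewrite (restr_eq0_subset st (eqP (proj_off_subproof t x))) linear0 subr0.
Qed.

End FreeModule.

Section FreeCover.
Variables (R : pzRingType) (A : lmodType R).
Implicit Types s t : seq A.

Definition lincomb s (x : A -> R^o) : A := \sum_(a <- undup s) (x a : R) *: a.

Lemma lincomb_is_linear s : linear (lincomb s).
Proof.
move=> c x y; rewrite /lincomb scaler_sumr -big_split; apply: eq_bigr => a _.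
by rewrite !fctE scalerDl scalerA.
Qed.

HB.instance Definition _ s :=
  GRing.isLinear.Build R (A -> R^o) A _ (lincomb s) (@lincomb_is_linear s).

Lemma lincomb_subset s t (x : A -> R^o) :
  {subset s <= t} -> (forall a, a \notin s -> x a = 0) -> lincomb t x = lincomb s x.
Proof.
move=> st xs; rewrite /lincomb (bigID (mem s)) /= [X in _ + X]big1 ?addr0; last first.
  by move=> a /xs ->; rewrite scale0r.
rewrite -big_filter; apply/perm_big/uniq_perm; rewrite ?filter_uniq ?undup_uniq //.
by move=> a; rewrite mem_filter !mem_undup; case: (boolP (a \in s)) => // /st ->.
Qed.

Lemma freemod_cover :
  exists g : {linear freemod R A -> A}, forall a, exists x, g x = a.
Proof.
have [_ /(_ A (fun s => lincomb s \o val \o @extend _ _ s))] := freemod_direct_limit R A.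
case=> [s t st f | [g gE] _].
  change (lincomb t (val (extend (widen R st f))) = lincomb s (val (extend f))).
  by rewrite extend_widen; apply: lincomb_subset => // a; apply: extend_fun_out.
exists g => a; exists (extend (fun _ : seq_sub [:: a] => 1)).
rewrite gE; change (lincomb [:: a] (val (extend (fun _ : seq_sub [:: a] => 1))) = a).
by rewrite /lincomb /= big_seq1 (extend_fun_in _ (mem_head a [::])) scale1r.
Qed.

End FreeCover.

Section TrivialIdeals.
Variable R : pzRingType.

Lemma fg_left_ideal0 : fg_left_ideal (fun r : R => r = 0).
Proof.
split; first by split=> [|//]; split=> [x y -> ->|r x ->]; rewrite ?addr0 ?mulr0.
exists 0%N, (fun _ => 0) => x.
by split=> [->|[c ->]]; [exists (fun _ => 0) |]; rewrite big_ord0.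
Qed.

Lemma is_quotient_by0 :
  is_quotient_by (fun r : R => r = 0) (idfun : {linear R^o -> R^o}).
Proof. by split=> [z|r]; [exists z | ]. Qed.

Lemma left_idealT : left_ideal (fun _ : R => True).
Proof. by []. Qed.

Lemma is_ideal_moduleT :
  is_ideal_module (fun _ : R => True) (idfun : {linear R^o -> R^o}).
Proof. by split=> // r; split=> // _; exists r. Qed.

End TrivialIdeals.

Section Covariant.
Variables (R R1 : pzRingType) (T : CovFunctor R R1).

Lemma cmap_factor_eq0 (U W V : lmodType R) (e : {linear U -> W})
    (d : {linear W -> V}) (h : {linear U -> V}) :
  (forall z : T W, z = 0) -> (forall x, h x = d (e x)) ->
  forall y, cmap T h y = 0.
Proof. by move=> TW0 hE y; rewrite (cmap_comp hE) (TW0 (cmap T e y)) linear0. Qed.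

Hypothesis TR0 : forall y : T R^o, y = 0.

Lemma cobj_finfree_eq0 (Y : finType) (y : T (Y -> R^o)) : y = 0.
Proof.
rewrite -(cmap_id (h := idfun) _ y) //.
apply: (additive_action_sum_eq0 (@cmap_add _ _ T _ _)
  (g := fun i => dirac i \o fun_eval i)).
  by move=> i; apply: cmap_factor_eq0 TR0 _.
exact: finfun_dirac_sum.
Qed.

Hypothesis T_LSigma : type_LSigma T.

Lemma cobj_freemod_eq0 (X : choiceType) (y : T (freemod R X)) : y = 0.
Proof.
apply: (direct_limit_trivial (T_LSigma (subset_directed X) (freemod_direct_system R X)
  (freemod_direct_limit R X))) => s.
exact: cobj_finfree_eq0.
Qed.

Hypothesis T_rex : right_exact T.

Lemma cobj_eq0 (A : lmodType R) (y : T A) : y = 0.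
Proof.
have [g g_surj] := freemod_cover A.
have [_ Tg_surj] := T_rex (kernel_short_exact g_surj).
by have [z <-] := Tg_surj y; rewrite (cobj_freemod_eq0 z) linear0.
Qed.

End Covariant.

Section Contravariant.
Variables (R R1 : pzRingType) (T : ContraFunctor R R1).

Lemma kmap_factor_eq0 (U W V : lmodType R) (e : {linear U -> W})
    (d : {linear W -> V}) (h : {linear U -> V}) :
  (forall z : T W, z = 0) -> (forall x, h x = d (e x)) ->
  forall y, kmap T h y = 0.
Proof. by move=> TW0 hE y; rewrite (kmap_comp hE) (TW0 (kmap T d y)) linear0. Qed.

Lemma kobj_trivial (U : lmodType R) : (forall x : U, x = 0) -> forall z : T U, z = 0.
Proof.
move=> U0 z; rewrite -(kmap_id (h := idfun) _ z) //.
exact: (additive_action_eq0 (@kmap_add _ _ T _ _)).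
Qed.

Hypothesis TR0 : forall y : T R^o, y = 0.

Lemma kobj_finfree_eq0 (Y : finType) (y : T (Y -> R^o)) : y = 0.
Proof.
rewrite -(kmap_id (h := idfun) _ y) //.
apply: (additive_action_sum_eq0 (@kmap_add _ _ T _ _)
  (g := fun i => dirac i \o fun_eval i)).
  by move=> i; apply: kmap_factor_eq0 TR0 _.
exact: finfun_dirac_sum.
Qed.

Section Vanishing.
Variable X : choiceType.
Implicit Types s t : seq X.

Lemma kmap_proj_on_eq0 t (z : T (freemod R X)) : kmap T (proj_on R t) z = 0.
Proof.
apply: (kmap_factor_eq0 (e := @restr R X t) (d := @extend R X t)) => //.
exact: kobj_finfree_eq0.
Qed.

Lemma kmap_idfun_sub_proj_on t (z : T (freemod R X)) :
  kmap T (idfun \- proj_on R t) z = z.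
Proof.
have idE x : idfun x = (idfun \- proj_on R t) x + proj_on R t x by rewrite /= subrK.
by rewrite -[RHS](kmap_id (h := idfun)) // (kmap_add idE) kmap_proj_on_eq0 addr0.
Qed.

Lemma kmap_proj_off_incl s t (st : {subset s <= t}) (z : T (vanishing R s)) :
  kmap T (proj_off R t) (kmap T (vanishing_incl R st) z) = kmap T (proj_off R s) z.
Proof.
rewrite -(kmap_comp (h := vanishing_incl R st \o proj_off R t)) //.
rewrite (kmap_comp (f := idfun \- proj_on R t) (g := proj_off R s)).
  by rewrite kmap_idfun_sub_proj_on.
exact: proj_off_incl.
Qed.

End Vanishing.

Hypothesis T_RSigma : type_RSigma T.

Lemma kobj_freemod_eq0 (X : choiceType) (y : T (freemod R X)) : y = 0.
Proof.
have Z0 (z : 'rV[R]_0) : z = 0 by apply: thinmx0.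
have [_ /(_ _ _ (@kmap_proj_off_incl X)) [[u uE] _]] := T_RSigma (subset_directed X)
  (vanishing_inverse_system R X) (@vanishing_inverse_limit R X _ Z0).
(* [T (proj_off t)] is onto, yet factors through [T 'rV_0 = 0]. *)
rewrite -(kmap_idfun_sub_proj_on (X := X) [::] y).
rewrite (kmap_comp (f := proj_off R [::]) (g := val)) //.
by rewrite -uE (kobj_trivial Z0 (kmap T _ _)) linear0.
Qed.

Hypothesis T_lex : left_exact T.

Lemma kobj_eq0 (A : lmodType R) (y : T A) : y = 0.
Proof.
have [g g_surj] := freemod_cover A.
have [Tg_inj _] := T_lex (kernel_short_exact g_surj).
by apply: Tg_inj; rewrite linear0; apply: kobj_freemod_eq0.
Qed.

End Contravariant.

Theorem theorem1 (Lambda Lambda1 : pzRingType) :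
  (forall T : CovFunctor Lambda Lambda1,
     right_exact T -> type_LSigma T ->
     (forall (I : Lambda -> Prop), fg_left_ideal I ->
        forall (Q : lmodType Lambda) (p : {linear Lambda^o -> Q}),
          is_quotient_by I p -> forall y : T Q, y = 0%R) ->
     forall (A : lmodType Lambda) (y : T A), y = 0%R) /\
  (forall T : ContraFunctor Lambda Lambda1,
     left_exact T -> type_RSigma T ->
     (forall (I : Lambda -> Prop), left_ideal I ->
        forall (M : lmodType Lambda) (j : {linear M -> Lambda^o}),
          is_ideal_module I j -> forall y : T M, y = 0%R) ->
     forall (A : lmodType Lambda) (y : T A), y = 0%R).
Proof.
split=> [T T_rex T_LSigma T_quot | T T_lex T_RSigma T_ideal].
  have TR0 (z : T Lambda^o) : z = 0 :=
    T_quot _ (@fg_left_ideal0 Lambda) _ _ (@is_quotient_by0 Lambda) z.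
  exact: cobj_eq0 TR0 T_LSigma T_rex.
have TR0 (z : T Lambda^o) : z = 0 :=
  T_ideal _ (@left_idealT Lambda) _ _ (@is_ideal_moduleT Lambda) z.
exact: kobj_eq0 TR0 T_RSigma T_lex.
Qed.
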